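(* Let $q\in\mathbb{Z}\setminus\{0\}$ and $G=BS(1,q)=\langle a,b\mid aba^{-1}=b^q\rangle$. Let $\varepsilon\colon G\to\mathbb{Z}$ be the homomorphism with $\varepsilon(a)=1$, $\varepsilon(b)=0$, and let $\iota\colon\ker\varepsilon\to\mathbb{Z}[1/q]$ be the group isomorphism with $\iota(b)=1$ (so $\iota(a^{-m}ba^{m})=q^{-m}$). Define $P_1=\{g:\varepsilon(g)>0\}\cup\{g\in\ker\varepsilon:\iota(g)>0\}$, $P_2=\{g:\varepsilon(g)<0\}\cup\{g\in\ker\varepsilon:\iota(g)>0\}$, $P_3=P_1^{-1}$ and $P_4=P_2^{-1}$. Then for each $i\in\{1,2,3,4\}$ there is a one-counter language $\mathcal{L}_i\subseteq\{a,a^{-1},b,b^{-1}\}^*$ whose image under the natural evaluation map onto $G$ is $P_i$.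
   Context: $\mathbb{Z}[1/q]$ is the smallest subring of $\mathbb{Q}$ containing $\mathbb{Z}$ and $1/q$, ordered as a subset of $\mathbb{R}$. A one-counter language is a language accepted by a nondeterministic pushdown automaton whose stack alphabet consists of a single symbol. The evaluation map sends a word in $a^{\pm1},b^{\pm1}$ to the corresponding product in $G$. *)

From HB Require Import structures.
From mathcomp Require Import all_boot all_order all_algebra.
Set Implicit Arguments. Unset Strict Implicit. Unset Printing Implicit Defensive.
Import Order.TTheory GRing.Theory Num.Theory.
Local Open Scope ring_scope.

(** Alphabet {a, a^-1, b, b^-1}. *)
Inductive letter := La | LA | Lb | LB.

Definition letter_code (x : letter) : nat :=
  match x with La => 0 | LA => 1 | Lb => 2 | LB => 3 end%N.
Definition letter_decode (n : nat) : option letter :=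
  match n with 0 => Some La | 1 => Some LA | 2 => Some Lb | 3 => Some LB | _ => None end%N.
Lemma letter_codeK : pcancel letter_code letter_decode.
Proof. by case. Qed.
HB.instance Definition _ := Equality.copy letter (pcan_type letter_codeK).

Definition word := seq letter.

Definition linv (x : letter) : letter :=
  match x with La => LA | LA => La | Lb => LB | LB => Lb end.
Definition winv (w : word) : word := rev (map linv w).

Definition bpow (q : int) : word :=
  if (0 <= q) then nseq `|q|%N Lb else nseq `|q|%N LB.

(** Equality in G = BS(1,q) = < a, b | a b a^-1 = b^q >: the congruence on
    words generated by free reduction and the defining relator. *)
Inductive bs_eq (q : int) : word -> word -> Prop :=
| bs_refl w : bs_eq q w w
| bs_sym u v : bs_eq q u v -> bs_eq q v u
| bs_trans u v w : bs_eq q u v -> bs_eq q v w -> bs_eq q u w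
| bs_free u v x : bs_eq q (u ++ x :: linv x :: v) (u ++ v)
| bs_rel u v : bs_eq q (u ++ [:: La; Lb; LA] ++ v) (u ++ bpow q ++ v).

Definition eps_letter (x : letter) : int :=
  match x with La => 1 | LA => -1 | _ => 0 end.
Definition eps (w : word) : int := \sum_(x <- w) eps_letter x.

(** Affine model: (k, r) represents x |-> q^k x + r; a |-> (1,0), b |-> (0,1).
    Its translation part restricted to ker eps is the isomorphism
    iota : ker eps -> Z[1/q] with iota(b) = 1 (so iota(a^-m b a^m) = q^-m). *)
Definition aff_mul (q : int) (g h : int * rat) : int * rat :=
  (g.1 + h.1, (q%:~R : rat) ^ g.1 * h.2 + g.2).
Definition aff_letter (x : letter) : int * rat :=
  match x with La => (1, 0) | LA => (-1, 0) | Lb => (0, 1) | LB => (0, -1) end.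
Definition aff (q : int) (w : word) : int * rat :=
  foldr (fun x g => aff_mul q (aff_letter x) g) (0, 0) w.
Definition iota (q : int) (w : word) : rat := (aff q w).2.

(** the four sets P_1..P_4, as predicates on words (invariant under bs_eq) *)
Definition P1 (q : int) (w : word) : bool :=
  (0 < eps w) || ((eps w == 0) && (0 < iota q w)).
Definition P2 (q : int) (w : word) : bool :=
  (eps w < 0) || ((eps w == 0) && (0 < iota q w)).
Definition P3 (q : int) (w : word) : bool := P1 q (winv w).
Definition P4 (q : int) (w : word) : bool := P2 q (winv w).

(** One-counter automata: nondeterministic pushdown automata whose stack
    alphabet is a single symbol X (stack = a counter), in the standard sense
    where a move may depend on whether the stack is empty (equivalently, a
    bottom-of-stack marker).  A transition (p, x, z, p', n): in state p,
    reading x (None = epsilon move), when (counter == 0) = z, go to p',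
    popping the top X (if any) and pushing n copies of X. *)
Record OCA := {
  oca_state : finType;
  oca_init : oca_state;
  oca_final : pred oca_state;
  oca_trans : seq (oca_state * option letter * bool * oca_state * nat)
}.

Definition oca_step (A : OCA) (p : oca_state A) (c : nat) (x : option letter)
    (p' : oca_state A) (c' : nat) : Prop :=
  exists n, (p, x, (c == 0)%N, p', n) \in @oca_trans A /\
            c' = (if (c == 0)%N then n else c.-1 + n)%N.

Inductive oca_reach (A : OCA) :
    oca_state A -> nat -> word -> oca_state A -> nat -> Prop :=
| reach_refl p c : oca_reach p c [::] p c
| reach_eps p c p' c' w r d :
    oca_step p c None p' c' -> oca_reach p' c' w r d -> oca_reach p c w r d
| reach_read p c x p' c' w r d :
    oca_step p c (Some x) p' c' -> oca_reach p' c' w r d ->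
    oca_reach p c (x :: w) r d.

Definition oca_accepts (A : OCA) (w : word) : Prop :=
  exists r d, @oca_reach A (@oca_init A) 0 w r d /\ @oca_final A r.

Definition one_counter (L : word -> Prop) : Prop :=
  exists A : OCA, forall w, L w <-> oca_accepts A w.

Definition image_is (q : int) (L : word -> Prop) (P : word -> bool) : Prop :=
  forall w : word, (exists2 w', L w' & bs_eq q w' w) <-> P w.

From HB Require Import structures.
From Stdlib Require Import Setoid Morphisms.
From mathcomp Require Import all_boot all_order all_algebra zify ring lra.
Import Order.TTheory GRing.Theory Num.Theory.
Set Implicit Arguments. Unset Strict Implicit. Unset Printing Implicit Defensive.
Local Open Scope ring_scope.

(** Every element of BS(1,q) is represented by a word a^-m b^n a^j, and m can
    be taken even since a^-m b^n a^j = a^-(m+1) b^(qn) a^(j+1).  In the affine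
    model (a : x |-> qx, b : x |-> x + 1) this word has epsilon = j - m and
    iota = q^-m n, which has the sign of n because m is even.  Each P_i is a
    lexicographic sign condition on (epsilon, iota), hence is recognised on
    even normal forms by a one-counter automaton that counts m while reading
    a^-m, remembers the sign of n, and compares j with m by popping.  Accepted
    words lie in P_i by an invariant on the affine image of the prefix read so
    far; since P_i is invariant under the relations, the language evaluates
    onto P_i.  Inversion flips both signs, so P_3 and P_4 are of the same kind. *)

Section OneCounterRuns.
Variable A : OCA.
Local Notation reach := (@oca_reach A).

Lemma oca_reach_cat p c u r d v s e :
  reach p c u r d -> reach r d v s e -> reach p c (u ++ v) s e.
Proof.
elim=> {p c u r d} // [p c p' c' w r d|p c x p' c' w r d] step _ IH /IH.
  exact: reach_eps step.
exact: reach_read step.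
Qed.

Lemma oca_reach_ind (I : oca_state A -> nat -> word -> Prop) :
  (forall p c x p' c' u, oca_step p c x p' c' -> I p c u -> I p' c' (u ++ seq_of_opt x)) ->
  forall p c w r d u, reach p c w r d -> I p c u -> I r d (u ++ w).
Proof.
move=> Istep p c w r d u run; elim: run u => {p c w r d} [p c u|p c p' c' w r d|p c x p' c' w r d].
- by rewrite cats0.
- by move=> step _ IH u /(Istep _ _ _ _ _ _ step) /IH; rewrite cats0.
- by move=> step _ IH u /(Istep _ _ _ _ _ _ step) /IH; rewrite -catA.
Qed.

Lemma oca_step_mem p c x p' c' b n : (p, x, b, p', n) \in oca_trans A ->
  (c == 0)%N = b -> c' = (if b then n else c.-1 + n)%N -> oca_step p c x p' c'.
Proof. by move=> mem c0 ->; exists n; rewrite c0. Qed.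

End OneCounterRuns.

Lemma linvK : involutive linv.
Proof. by case. Qed.

Lemma bpowSn (n : nat) : bpow n.+1 = Lb :: bpow n.
Proof. by []. Qed.

Lemma bpowNSn (n : nat) : bpow (- n.+1%:Z) = LB :: bpow (- n%:Z).
Proof. by case: n. Qed.

Lemma bpowN (n : nat) : bpow (- n%:Z) = nseq n LB.
Proof. by case: n. Qed.

Section AffineModel.
Variable q : int.
Hypothesis q_neq0 : q != 0.
Local Notation Q := (q%:~R : rat).
Local Notation "g * h" := (aff_mul q g h).

Lemma aff_mulA : associative (aff_mul q).
Proof.
move=> [k1 r1] [k2 r2] [k3 r3]; rewrite /aff_mul /= addrA.
by rewrite expfzDr ?intr_eq0 //; congr pair; ring.
Qed.

Lemma aff_mul1g : left_id (0, 0) (aff_mul q).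
Proof. by move=> [k r]; rewrite /aff_mul /= add0r expr0z mul1r addr0. Qed.

Lemma aff_mulg1 : right_id (0, 0) (aff_mul q).
Proof. by move=> [k r]; rewrite /aff_mul /= addr0 mulr0 add0r. Qed.

Lemma aff_cat u v : aff q (u ++ v) = aff q u * aff q v.
Proof. by elim: u => [|x u IH] /=; rewrite ?aff_mul1g // IH aff_mulA. Qed.

Lemma aff_letter_linv x : aff_letter x * aff_letter (linv x) = (0, 0).
Proof. by case: x; rewrite /aff_mul /= ?expr0z ?mulr0 ?mul1r ?addr0 ?addrN ?addNr. Qed.

Lemma aff_bpow n : aff q (bpow n) = (0, n%:~R).
Proof.
elim/int_rec: n => [//|n|n]; [rewrite bpowSn|rewrite bpowNSn] => /= ->.
  by rewrite /aff_mul /= expr0z mul1r -[n.+1]addn1 PoszD intrD addrC.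
by rewrite /aff_mul /= expr0z mul1r -[n.+1]addn1 PoszD opprD intrD addrC.
Qed.

Lemma aff_bs_eq u v : bs_eq q u v -> aff q u = aff q v.
Proof.
elim=> {u v} // [u v w _ -> _ -> //|u v x|u v].
  by rewrite !aff_cat /= [aff_letter x * _]aff_mulA aff_letter_linv aff_mul1g.
rewrite !aff_cat aff_bpow /=; congr (_ * (_ * _)).
by rewrite /aff_mul /= expr1z expr0z; congr pair; ring.
Qed.

Lemma eps_aff w : eps w = (aff q w).1.
Proof. by elim: w => [|x w IH]; rewrite /eps ?big_nil // big_cons -/(eps w) IH; case: x. Qed.

Lemma aff_nseqA m : aff q (nseq m LA) = (- m%:Z, 0).
Proof. by elim: m => [//|m /= ->]; rewrite /aff_mul /= mulr0 addr0 -addn1 PoszD opprD addrC. Qed.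

Lemma aff_nseqa j : aff q (nseq j La) = (j%:Z, 0).
Proof. by elim: j => [//|j /= ->]; rewrite /aff_mul /= mulr0 addr0 -addn1 PoszD addrC. Qed.

Lemma expr_even_gt0 m : ~~ odd m -> 0 < Q ^ (- m%:Z).
Proof. by move=> m_even; rewrite -exprnN invr_gt0 exprn_even_gt0 // intr_eq0 q_neq0 orbT. Qed.

End AffineModel.

Section WordCongruence.
Variable q : int.
Local Notation "u ~ v" := (bs_eq q u v) (at level 70).
#[local] Hint Resolve bs_refl : core.

Lemma bs_eq_catl s u v : u ~ v -> s ++ u ~ s ++ v.
Proof.
elim=> {u v} [w|u v _ IH|u v w _ IH1 _ IH2|u v x|u v]; rewrite ?catA.
- by [].
- exact: bs_sym IH.
- exact: bs_trans IH1 IH2.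
- exact: bs_free.
- by rewrite -!(catA _ _ v); apply: bs_rel.
Qed.

Lemma bs_eq_catr t u v : u ~ v -> u ++ t ~ v ++ t.
Proof.
elim=> {u v} [w|u v _ IH|u v w _ IH1 _ IH2|u v x|u v]; rewrite -?catA.
- by [].
- exact: bs_sym IH.
- exact: bs_trans IH1 IH2.
- exact: bs_free.
- exact: bs_rel.
Qed.

#[local] Instance bs_eq_Equivalence : Equivalence (bs_eq q).
Proof. by split; [exact: bs_refl | exact: bs_sym | exact: bs_trans]. Qed.

#[local] Instance cat_bs_eq_Proper : Proper (bs_eq q ==> bs_eq q ==> bs_eq q) cat.
Proof. by move=> u u' Hu v v' Hv; apply: bs_trans (bs_eq_catr _ Hu) (bs_eq_catl _ Hv). Qed.

#[local] Instance cons_bs_eq_Proper x : Proper (bs_eq q ==> bs_eq q) (cons x).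
Proof. by move=> u v; apply: (bs_eq_catl [:: x]). Qed.

Lemma cancel_linv x v : x :: linv x :: v ~ v.
Proof. exact: (bs_free q [::]). Qed.

Lemma cancel_linv_r u x : u ++ [:: x; linv x] ~ u.
Proof. by have := bs_free q u [::] x; rewrite cats0. Qed.

Lemma Lb_bpow n : Lb :: bpow n ~ bpow (n + 1).
Proof.
elim/int_rec: n => [//|k _|k _]; first by rewrite -bpowSn -PoszD addn1.
by rewrite bpowNSn (cancel_linv Lb) (_ : - k.+1%:Z + 1 = - k%:Z) //; lia.
Qed.

Lemma LB_bpow n : LB :: bpow n ~ bpow (n - 1).
Proof.
elim/int_rec: n => [//|k _|k _].
  by rewrite bpowSn (cancel_linv LB) (_ : k.+1%:Z - 1 = k) //; lia.
by rewrite -bpowNSn (_ : - k.+1%:Z - 1 = - k.+2%:Z) //; lia.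
Qed.

Lemma bpowD x y : bpow x ++ bpow y ~ bpow (x + y).
Proof.
elim/int_rec: x => [|k IH|k IH]; first by rewrite add0r.
  by rewrite bpowSn /= IH Lb_bpow (_ : k%:Z + y + 1 = k.+1%:Z + y) //; lia.
by rewrite bpowNSn /= IH LB_bpow (_ : - k%:Z + y - 1 = - k.+1%:Z + y) //; lia.
Qed.

Lemma bpowNK x u : bpow (- x) ++ bpow x ++ u ~ u.
Proof. by rewrite catA bpowD addNr. Qed.

Lemma relator : [:: La; Lb; LA] ~ bpow q.
Proof. by have := bs_rel q [::] [::]; rewrite /= cats0. Qed.

Lemma relator_inv : [:: La; LB; LA] ~ bpow (- q).
Proof.
rewrite -(bpowNK q [:: La; LB; LA]) -relator /=.
by rewrite (cancel_linv LA) (cancel_linv Lb) (cancel_linv La) cats0.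
Qed.

Lemma conj_bpow n : La :: bpow n ++ [:: LA] ~ bpow (q * n).
Proof.
elim/int_rec: n => [|k IH|k IH]; first by rewrite mulr0 (cancel_linv La).
  rewrite bpowSn /= -(cancel_linv LA (bpow k ++ _)).
  rewrite -[La :: Lb :: _]/([:: La; Lb; LA] ++ _) relator IH bpowD.
  by rewrite (_ : q + q * k = q * k.+1%:Z) // -addn1 PoszD; ring.
rewrite bpowNSn /= -(cancel_linv LA (bpow _ ++ _)).
rewrite -[La :: LB :: _]/([:: La; LB; LA] ++ _) relator_inv IH bpowD.
by rewrite (_ : - q + q * - k%:Z = q * - k.+1%:Z) // -addn1 PoszD; ring.
Qed.

Lemma La_bpow n : La :: bpow n ~ bpow (q * n) ++ [:: La].
Proof. by rewrite -conj_bpow /= -catA (cancel_linv_r _ LA). Qed.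

Lemma bpow_LA n : bpow n ++ [:: LA] ~ LA :: bpow (q * n).
Proof. by rewrite -conj_bpow (cancel_linv LA). Qed.

Lemma bpow_nseqA m n : bpow n ++ nseq m LA ~ nseq m LA ++ bpow (q ^+ m * n).
Proof.
elim: m n => [|m IH] n; first by rewrite cats0 expr0 mul1r.
by rewrite -[nseq m.+1 LA]/([:: LA] ++ _) catA bpow_LA /= IH exprSr mulrA.
Qed.

Definition nf m n j := nseq m LA ++ bpow n ++ nseq j La.

Lemma bpow_nf e m n j : bpow e ++ nf m n j ~ nf m (q ^+ m * e + n) j.
Proof. by rewrite /nf catA bpow_nseqA -catA [bpow (_ * e) ++ _]catA bpowD. Qed.

Lemma La_nf0 n j : La :: nf 0 n j ~ nf 0 (q * n) j.+1.
Proof. by rewrite /nf /= -cat_cons La_bpow -catA. Qed.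

Lemma nf_exists w : exists m n j, w ~ nf m n j.
Proof.
elim: w => [|x w [m [n [j w_nf]]]]; first by exists 0%N, 0, 0%N.
case: x.
- case: m w_nf => [|m] w_nf; first by exists 0%N, (q * n), j.+1; rewrite w_nf La_nf0.
  by exists m, n, j; rewrite w_nf (cancel_linv La).
- by exists m.+1, n, j; rewrite w_nf.
- by exists m, (q ^+ m * 1 + n), j; rewrite w_nf -bpow_nf.
- by exists m, (q ^+ m * -1 + n), j; rewrite w_nf -bpow_nf.
Qed.

Lemma nf_shift m n j : nf m n j ~ nf m.+1 (q * n) j.+1.
Proof.
rewrite {1}/nf -(cancel_linv LA (bpow n ++ _)) -cat_cons La_bpow /=.
by rewrite /nf -catA /= -(cat1s LA) catA -[[:: LA]]/(nseq 1 LA) -nseqD addn1.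
Qed.

Lemma nf_even_exists w : exists m n j, ~~ odd m /\ w ~ nf m n j.
Proof.
have [m [n [j w_nf]]] := nf_exists w.
have [m_odd|m_even] := boolP (odd m); last by exists m, n, j; split => //; rewrite w_nf.
by exists m.+1, (q * n), j.+1; rewrite /= m_odd w_nf nf_shift.
Qed.

Lemma winv_cat w : winv w ++ w ~ [::].
Proof.
elim: w => [//|x w IH].
rewrite /winv map_cons rev_cons -/(winv w) -cats1 -catA /=.
by rewrite -[in x :: w](linvK x) (cancel_linv (linv x)).
Qed.

End WordCongruence.

Definition has_sign (R : numDomainType) (s : bool) (x : R) : bool :=
  if s then 0 < x else x < 0.

Lemma has_signN (R : numDomainType) s (x : R) : has_sign s (- x) = has_sign (~~ s) x.
Proof. by case: s; rewrite /has_sign ?oppr_gt0 ?oppr_lt0. Qed.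

Lemma has_sign0 (R : numDomainType) s : has_sign s (0 : R) = false.
Proof. by case: s; rewrite /has_sign ltxx. Qed.

Lemma has_sign_pmull (R : numDomainType) s (a x : R) :
  0 < a -> has_sign s (a * x) = has_sign s x.
Proof. by case: s => a_gt0; rewrite /has_sign ?pmulr_rgt0 ?pmulr_rlt0. Qed.

Lemma has_sign_intr (R : numDomainType) s (n : int) : has_sign s (n%:~R : R) = has_sign s n.
Proof. by case: s; rewrite /has_sign ?ltr0z ?ltrz0. Qed.

Definition lex_sign (se si : bool) (g : int * rat) : bool :=
  has_sign se g.1 || (g.1 == 0) && has_sign si g.2.

Lemma lex_sign_inv q se si g h :
  aff_mul q g h = (0, 0) -> lex_sign se si g = lex_sign (~~ se) (~~ si) h.
Proof.
case: g h => [k' r'] [k r]; rewrite /aff_mul /= => -[/eqP].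
rewrite addr_eq0 => /eqP -> {k'}; rewrite /lex_sign /= has_signN oppr_eq0.
have [-> /=|_] := eqVneq k 0; last by rewrite !andFb.
rewrite expr0z mul1r => /eqP; rewrite addr_eq0 => /eqP ->.
by rewrite has_signN negbK.
Qed.

Definition pos_cone q se si (w : word) : bool := lex_sign se si (aff q w).

Section PositiveCones.
Variable q : int.
Hypothesis q_neq0 : q != 0.

Lemma aff_nf m n j : aff q (nf m n j) = (j%:Z - m%:Z, (q%:~R : rat) ^ (- m%:Z) * n%:~R).
Proof.
rewrite /nf !(aff_cat q_neq0) aff_nseqA aff_bpow aff_nseqa /aff_mul /=.
by rewrite mulr0 !add0r addr0 addrC.
Qed.

Lemma pos_cone_bs_eq se si u v : bs_eq q u v -> pos_cone q se si u = pos_cone q se si v.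
Proof. by move=> /(aff_bs_eq q_neq0) eq_uv; rewrite /pos_cone eq_uv. Qed.

Lemma pos_cone_winv se si w : pos_cone q se si (winv w) = pos_cone q (~~ se) (~~ si) w.
Proof.
rewrite /pos_cone; apply: (@lex_sign_inv q).
by rewrite -(aff_cat q_neq0) (aff_bs_eq q_neq0 (winv_cat q w)).
Qed.

Lemma pos_cone_nf se si m n j : ~~ odd m ->
  pos_cone q se si (nf m n j) = has_sign se (j%:Z - m%:Z) || (j == m) && has_sign si n.
Proof.
move=> m_even; rewrite /pos_cone aff_nf /lex_sign /= subr_eq0 eqz_nat.
by rewrite has_sign_pmull ?expr_even_gt0 // has_sign_intr.
Qed.

Lemma P1E : P1 q =1 pos_cone q true true.
Proof. by move=> w; rewrite /P1 /pos_cone /lex_sign /iota (eps_aff q). Qed.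

Lemma P2E : P2 q =1 pos_cone q false true.
Proof. by move=> w; rewrite /P2 /pos_cone /lex_sign /iota (eps_aff q). Qed.

Lemma P3E : P3 q =1 pos_cone q false false.
Proof. by move=> w; rewrite /P3 P1E pos_cone_winv. Qed.

Lemma P4E : P4 q =1 pos_cone q true false.
Proof. by move=> w; rewrite /P4 P2E pos_cone_winv. Qed.

End PositiveCones.

Inductive state := InvEven | InvOdd | PowPos | PowNeg | PopZero | PopPos | PopNeg | Excess | Accept.

Definition state_code (p : state) : nat :=
  match p with
  | InvEven => 0 | InvOdd => 1 | PowPos => 2 | PowNeg => 3 | PopZero => 4
  | PopPos => 5 | PopNeg => 6 | Excess => 7 | Accept => 8
  end.
Definition state_enum :=
  [:: InvEven; InvOdd; PowPos; PowNeg; PopZero; PopPos; PopNeg; Excess; Accept].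
Definition state_decode (n : nat) : option state := nth None (map Some state_enum) n.
Lemma state_codeK : pcancel state_code state_decode. Proof. by case. Qed.
HB.instance Definition _ := Countable.copy state (pcan_type state_codeK).
Lemma state_enumP : Finite.axiom state_enum. Proof. by case. Qed.
HB.instance Definition _ := isFinite.Build state state_enumP.

Definition transition := (state * option letter * bool * state * nat)%type.

(* A move pops one symbol when the counter is nonzero before pushing, so [keep]
   leaves the counter unchanged and [push] increments it, whatever its value. *)
Definition keep p x p' : seq transition := [:: (p, x, true, p', 0); (p, x, false, p', 1)]%N.
Definition push p x p' : seq transition := [:: (p, x, true, p', 1); (p, x, false, p', 2)]%N.
Definition pop_or_excess p : seq transition :=
  [:: (p, Some La, false, p, 0); (p, Some La, true, Excess, 0)]%N.

Definition pop_states := [:: PopZero; PopPos; PopNeg].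

Definition core_trans : seq transition :=
  push InvEven (Some LA) InvOdd ++ push InvOdd (Some LA) InvEven ++
  keep InvEven (Some Lb) PowPos ++ keep PowPos (Some Lb) PowPos ++
  keep InvEven (Some LB) PowNeg ++ keep PowNeg (Some LB) PowNeg ++
  keep InvEven None PopZero ++ keep PowPos None PopPos ++ keep PowNeg None PopNeg ++
  flatten [seq pop_or_excess p | p <- pop_states] ++ [:: (Excess, Some La, true, Excess, 0%N)].

Definition pop_state (s : bool) := if s then PopPos else PopNeg.

Definition accept_trans (se si : bool) : seq transition :=
  (pop_state si, None, true, Accept, 0%N) ::
  if se then [:: (Excess, None, true, Accept, 0%N)]
  else [seq (p, None, false, Accept, 0%N) | p <- pop_states].

Definition cone_oca (se si : bool) : OCA :=
  {| oca_state := state; oca_init := InvEven; oca_final := pred1 Accept;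
     oca_trans := core_trans ++ accept_trans se si |}.

(* [g] is the affine image of the prefix read so far. *)
Definition state_inv (se si : bool) (p : state) (c : nat) (g : int * rat) : Prop :=
  match p with
  | InvEven => g.1 = - c%:Z /\ g.2 = 0 /\ ~~ odd c
  | InvOdd => g.1 = - c%:Z /\ g.2 = 0 /\ odd c
  | PowPos => g.1 = - c%:Z /\ 0 < g.2 /\ ~~ odd c
  | PowNeg => g.1 = - c%:Z /\ g.2 < 0 /\ ~~ odd c
  | PopZero => g.1 = - c%:Z /\ g.2 = 0
  | PopPos => g.1 = - c%:Z /\ 0 < g.2
  | PopNeg => g.1 = - c%:Z /\ g.2 < 0
  | Excess => 0 < g.1
  | Accept => lex_sign se si g
  end.

Section ConeAutomaton.
Variable q : int.
Hypothesis q_neq0 : q != 0.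
Variables se si : bool.
Local Notation reach := (@oca_reach (cone_oca se si)).
Local Notation step := (@oca_step (cone_oca se si)).

Lemma aff_mul_opt k r x : aff_mul q (k, r) (aff q (seq_of_opt x)) =
  match x with
  | None => (k, r) | Some La => (k + 1, r) | Some LA => (k - 1, r)
  | Some Lb => (k, r + (q%:~R : rat) ^ k) | Some LB => (k, r - (q%:~R : rat) ^ k)
  end.
Proof. by case: x => [[]|]; rewrite /aff_mul /= ?mulr0 ?mulr1 ?mulrN1 ?addr0 ?add0r // addrC. Qed.

Arguments state_inv : simpl never.
Arguments aff_mul : simpl never.

Lemma core_step_inv p c x p' n k r : (p, x, c == 0%N, p', n) \in core_trans ->
  state_inv se si p c (k, r) ->
  state_inv se si p' (if c == 0 then n else c.-1 + n)%N (aff_mul q (k, r) (aff q (seq_of_opt x))).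
Proof.
rewrite /core_trans /=.
repeat (case/predU1P => [[-> -> + -> ->]|]); last by [].
all: rewrite aff_mul_opt; case: c => [|c] // _ /=; rewrite /state_inv /=.
all: try by intuition lia.
all: case=> k_eq [r_sign c_even]; have : 0 < (q%:~R : rat) ^ k by rewrite k_eq expr_even_gt0.
all: by move=> Qk_gt0; split; [lia | split; [lra | lia]].
Qed.

Lemma accept_step_inv p c x p' n k r : (p, x, c == 0%N, p', n) \in accept_trans se si ->
  state_inv se si p c (k, r) ->
  state_inv se si p' (if c == 0 then n else c.-1 + n)%N (aff_mul q (k, r) (aff q (seq_of_opt x))).
Proof.
rewrite /accept_trans /pop_states; case: se si => [] [] /=.
all: repeat (case/predU1P => [[-> -> + -> ->]|]); try by [].
all: rewrite aff_mulg1; case: c => [|c] // _ /=; rewrite /state_inv /lex_sign /has_sign /=.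
all: first [by move=> ?; lia | by case=> -> ->; lia].
Qed.

Lemma state_inv_step p c x p' c' g : step p c x p' c' ->
  state_inv se si p c g -> state_inv se si p' c' (aff_mul q g (aff q (seq_of_opt x))).
Proof.
case: g => k r [n [+ ->]]; rewrite mem_cat => /orP[].
  exact: core_step_inv.
exact: accept_step_inv.
Qed.

Lemma cone_oca_sound w : oca_accepts (cone_oca se si) w -> pos_cone q se si w.
Proof.
case=> r [d [run /eqP r_accept]]; subst r.
apply: (oca_reach_ind (A := cone_oca se si)
          (I := fun p c u => state_inv se si p c (aff q u)) _ run (u := [::])).
- by move=> p c x p' c' u pq; rewrite (aff_cat q_neq0); apply: state_inv_step.
- by rewrite /state_inv.
Qed.

Lemma core_step p c x p' c' b n : (p, x, b, p', n) \in core_trans ->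
  (c == 0)%N = b -> c' = (if b then n else c.-1 + n)%N -> step p c x p' c'.
Proof. by move=> mem; apply: oca_step_mem; rewrite mem_cat mem. Qed.

Lemma keep_step p x p' c : all (mem core_trans) (keep p x p') -> step p c x p' c.
Proof.
case/and3P=> mem0 mem1 _; case: c => [|c]; first exact: core_step mem0 _ _.
by apply: core_step mem1 _ _; rewrite //= addn1.
Qed.

Lemma push_step p x p' c : all (mem core_trans) (push p x p') -> step p c x p' c.+1.
Proof.
case/and3P=> mem0 mem1 _; case: c => [|c]; first exact: core_step mem0 _ _.
by apply: core_step mem1 _ _; rewrite //= addn2.
Qed.

Definition inv_state c := if odd c then InvOdd else InvEven.

Lemma run_inv k c : reach (inv_state c) c (nseq k LA) (inv_state (c + k)) (c + k).
Proof.
elim: k c => [|k IH] c; first by rewrite addn0; apply: reach_refl.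
rewrite -addSnnS; apply: reach_read (IH c.+1).
by apply: push_step; rewrite /inv_state /=; case: (odd c).
Qed.

Lemma run_keep p y k c : all (mem core_trans) (keep p (Some y) p) -> reach p c (nseq k y) p c.
Proof.
by move=> sub; elim: k => [|k IH]; [apply: reach_refl | apply: reach_read (keep_step _ sub) IH].
Qed.

Definition pop_of (n : int) := if n == 0 then PopZero else pop_state (0 < n).

Lemma run_pow m n : reach InvEven m (bpow n) (pop_of n) m.
Proof.
have to_pop p p' : all (mem core_trans) (keep p None p') -> reach p m [::] p' m.
  by move=> sub; apply: reach_eps (keep_step _ sub) (reach_refl _ _).
case: n => [[|k]|k]; first exact: to_pop.
  rewrite bpowSn; apply: (@reach_read (cone_oca se si) _ _ _ PowPos m); first exact: keep_step.
  by rewrite -[bpow k]cats0; apply: oca_reach_cat (run_keep _ _ _) (to_pop _ _ _).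
rewrite NegzE bpowNSn bpowN.
apply: (@reach_read (cone_oca se si) _ _ _ PowNeg m); first exact: keep_step.
by rewrite -[nseq k LB]cats0; apply: oca_reach_cat (run_keep _ _ _) (to_pop _ _ _).
Qed.

Lemma pop_or_excess_core p : p \in pop_states -> all (mem core_trans) (pop_or_excess p).
Proof. by rewrite !inE => /or3P[]/eqP->. Qed.

Lemma run_pop p m j : p \in pop_states -> (j <= m)%N -> reach p m (nseq j La) p (m - j).
Proof.
move=> /pop_or_excess_core/and3P[pop_mem _ _].
elim: j m => [|j IH] [|m] // j_le; try by rewrite subn0; apply: reach_refl.
rewrite subSS; apply: reach_read (IH m j_le).
by apply: core_step pop_mem _ _; rewrite //= addn0.
Qed.

Lemma run_excess j : reach Excess 0 (nseq j La) Excess 0.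
Proof.
elim: j => [|j IH]; first exact: reach_refl.
by apply: reach_read IH; apply: (core_step (b := true) (n := 0%N)).
Qed.

Lemma run_overflow p m j : p \in pop_states -> (m < j)%N -> reach p m (nseq j La) Excess 0.
Proof.
move=> p_pop lt_mj; rewrite -(subnKC lt_mj) addSnnS nseqD.
apply: oca_reach_cat (run_pop p_pop (leqnn m)) _; rewrite subnn.
apply: reach_read (run_excess _).
by case/pop_or_excess_core/and3P: p_pop => _ excess_mem _; apply: core_step excess_mem _ _.
Qed.

Lemma accept_pop_state : step (pop_state si) 0 None Accept 0.
Proof. by apply: (oca_step_mem (b := true) (n := 0%N)); rewrite // mem_cat mem_head orbT. Qed.

Lemma accept_excess : se -> step Excess 0 None Accept 0.
Proof.
move=> se_true; apply: (oca_step_mem (b := true) (n := 0%N)) => //.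
by rewrite mem_cat /accept_trans se_true !inE eqxx !orbT.
Qed.

Lemma accept_pop p c : ~~ se -> p \in pop_states -> step p c.+1 None Accept c.
Proof.
move=> se_false p_pop; apply: (oca_step_mem (b := false) (n := 0%N)); rewrite ?addn0 //.
rewrite mem_cat /accept_trans (negbTE se_false); apply/orP; right.
by rewrite in_cons (map_f (fun p => (p, None, false, Accept, 0%N)) p_pop) orbT.
Qed.

Lemma pop_of_sign n : has_sign si n -> pop_of n = pop_state si.
Proof.
by case: si => /= sgn; rewrite /pop_of ?(gt_eqF sgn) ?(lt_eqF sgn) ?sgn ?(lt_gtF sgn).
Qed.

Lemma cone_oca_complete m n j : ~~ odd m ->
  pos_cone q se si (nf m n j) -> oca_accepts (cone_oca se si) (nf m n j).
Proof.
move=> m_even; rewrite pos_cone_nf // => cone.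
have run_head : reach InvEven 0 (nseq m LA ++ bpow n) (pop_of n) m.
  have := run_inv m 0; rewrite /inv_state /= (negbTE m_even) => run_m.
  exact: oca_reach_cat run_m (run_pow m n).
suff [r [d [e [run_tail accept]]]] :
    exists r d e, reach (pop_of n) m (nseq j La) r d /\ step r d None Accept e.
  exists Accept, e; split => //; rewrite /nf catA -[nseq j La]cats0.
  exact: oca_reach_cat run_head (oca_reach_cat run_tail (reach_eps accept (reach_refl _ _))).
have pop_n : pop_of n \in pop_states by rewrite /pop_of; case: (n == 0); [|case: (0 < n)].
case: (ltngtP m j) => [lt_mj | lt_jm | eq_mj].
- have se_true : se by move: cone; rewrite gtn_eqF // andFb orbF; case: se => //=; lia.
  by exists Excess, 0%N, 0%N; split; [apply: run_overflow | apply: accept_excess].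
- have se_false : ~~ se by move: cone; rewrite ltn_eqF // andFb orbF; case: se => //=; lia.
  exists (pop_of n), (m - j)%N, (m - j).-1; split; first exact/run_pop/ltnW.
  by rewrite -{1}(prednK (_ : 0 < m - j)%N) ?subn_gt0 //; apply: accept_pop.
- move: cone; rewrite eq_mj subrr has_sign0 eqxx /= => /pop_of_sign ->.
  exists (pop_state si), 0%N, 0%N; split; last exact: accept_pop_state.
  by rewrite -(subnn j); apply: run_pop; case: (si).
Qed.

Lemma image_cone_oca : image_is q (oca_accepts (cone_oca se si)) (pos_cone q se si).
Proof.
move=> w; split=> [[w' acc_w' /(pos_cone_bs_eq q_neq0) <-] | cone_w].
  exact: cone_oca_sound.
have [m [n [j [m_even w_nf]]]] := nf_even_exists q w.
exists (nf m n j); last exact: bs_sym w_nf.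
by apply: cone_oca_complete; rewrite // -(pos_cone_bs_eq q_neq0 _ _ w_nf).
Qed.

End ConeAutomaton.

Lemma one_counter_image (q : int) (P : word -> bool) se si : q != 0 ->
  P =1 pos_cone q se si -> exists L : word -> Prop, one_counter L /\ image_is q L P.
Proof.
move=> q_neq0 P_cone; exists (oca_accepts (cone_oca se si)).
split; first by exists (cone_oca se si).
by move=> w; rewrite P_cone; apply: image_cone_oca.
Qed.

Theorem proposition3p8 (q : int) (hq : q != 0) :
  (exists L : word -> Prop, one_counter L /\ image_is q L (P1 q)) /\
  (exists L : word -> Prop, one_counter L /\ image_is q L (P2 q)) /\
  (exists L : word -> Prop, one_counter L /\ image_is q L (P3 q)) /\
  (exists L : word -> Prop, one_counter L /\ image_is q L (P4 q)).
Proof.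
split; [|split; [|split]].
- exact: one_counter_image hq (P1E q).
- exact: one_counter_image hq (P2E q).
- exact: one_counter_image hq (P3E hq).
- exact: one_counter_image hq (P4E hq).
Qed.
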